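(* Let $f:\mathcal{X}\to\Delta^{k-1}$ be a classifier outputting confidence vectors. Let $P_S$ and $P_T$ be source and target distributions over $\mathcal{X}\times\mathcal{Y}$ with $k$ classes, and write $P_S(y)$, $P_T(y)$ for the source and target label distributions, viewed as distributions over one-hot vectors $\{0,1\}^k\cap\Delta^{k-1}$. Let $f_\# P_T(c)$ be the distribution of $f(x)$ for $x\sim P_T(x)$, and let $P_{\mathrm{pseudo}}(y)$ be the distribution of the one-hot vector $e_{\arg\max_j f_j(x)}$ for $x\sim P_T(x)$. Define $\hat\epsilon_{\mathrm{COT}}=W_\infty\bigl(f_\# P_T(c),P_S(y)\bigr)$. If $P_T(y)=P_S(y)$, then $$\hat\epsilon_{\mathrm{COT}}\ \ge\ 0.5\,W_\infty\bigl(P_{\mathrm{pseudo}}(y),P_T(y)\bigr).$$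
   Context: $\Delta^{k-1}=\{c\in\mathbb{R}^k: c_j\ge 0,\ \sum_j c_j=1\}$; $e_i$ is the $i$-th standard basis vector. For probability distributions $P,Q$ on $\mathbb{R}^k$, $W_\infty(P,Q)=\inf_{\pi\in\Pi(P,Q)}\int\|u-v\|_\infty\,d\pi(u,v)$ over couplings $\pi$ of $P$ and $Q$ (optimal transport distance with ground cost $\|u-v\|_\infty$). Ties in $\arg\max$ are broken by a fixed rule (e.g. smallest index). *)

From HB Require Import structures.
From mathcomp Require Import all_boot all_order all_algebra.
From mathcomp Require Import all_classical all_reals all_analysis.
Set Implicit Arguments. Unset Strict Implicit. Unset Printing Implicit Defensive.
Import Order.TTheory GRing.Theory Num.Theory.
Local Open Scope classical_set_scope.
Local Open Scope ring_scope.

HB.instance Definition _ (k : nat) := isPointed.Build 'I_k.+1 ord0.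

HB.instance Definition _ (k : nat) := @isMeasurable.Build default_measure_display
  'I_k.+1 discrete_measurable discrete_measurable0
  discrete_measurableC discrete_measurableU.

Section Defs.
Variable R : realType.

(* R^n is modelled as n.-tuple R with the product (= Borel) sigma-algebra. *)
Definition supnorm_dist n (u v : n.-tuple R) : R :=
  \big[Num.max/0]_(i < n) `|tnth u i - tnth v i|.

Definition simplex n : set (n.-tuple R) :=
  [set c | (forall i, 0 <= tnth c i) /\ \sum_(i < n) tnth c i = 1].

Definition onehot n (i : 'I_n) : n.-tuple R := [tuple (i == j)%:R | j < n].

(* arg max_j c_j, ties broken by smallest index *)
Definition argmax k (c : k.+1.-tuple R) : 'I_k.+1 :=
  inord (find (fun x => all (fun y => y <= x) c) c).

Definition coupling n (P Q : set (n.-tuple R) -> \bar R)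
    (pi : probability (n.-tuple R * n.-tuple R)%type R) : Prop :=
  forall A : set (n.-tuple R), measurable A ->
    pi (fst @^-1` A) = P A /\ pi (snd @^-1` A) = Q A.

(* optimal transport distance with ground cost ||u - v||_inf *)
Definition W_inf n (P Q : set (n.-tuple R) -> \bar R) : \bar R :=
  ereal_inf [set (\int[pi]_z (supnorm_dist z.1 z.2)%:E)%E
            | pi in [set pi | coupling P Q pi]].
End Defs.

From HB Require Import structures.
From mathcomp Require Import all_boot all_order all_algebra.
From mathcomp Require Import all_classical all_reals all_analysis.
From mathcomp Require Import measurable_realfun lra.
Import Order.TTheory GRing.Theory Num.Theory.
Local Open Scope classical_set_scope.
Local Open Scope ring_scope.

(** Push any coupling [pi] of [f#P_T] and [P_S(y)] forward along
    [(c, e) |-> (e_(argmax c), e)].  Since [P_T(y) = P_S(y)], this is a coupling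
    of [P_pseudo(y)] and [P_T(y)], and its cost is at most twice that of [pi]
    because of the pointwise bound [|e_(argmax c) - e_i|_oo <= 2 |c - e_i|_oo]:
    if [j := argmax c <> i] then [c_j >= c_i], so
    [1 <= (1 - c_i) + c_j <= 2 |c - e_i|_oo].  The bound holds for every vector
    [c]. *)

Section argmax.
Context {R : realType} {n : nat}.
Implicit Types (c : n.+1.-tuple R) (i l : 'I_n.+1).

Lemma argmaxP c i : argmax c = i <->
  (forall l, tnth c l <= tnth c i) /\
  (forall l, (l < i)%N -> tnth c l < tnth c i).
Proof.
pose p x := all (fun y => y <= x) c.
have pP x : reflect (forall l, tnth c l <= x) (p x).
  apply: (iffP allP) => [le_x l|le_x _ /tnthP[l ->]]; last exact: le_x.
  exact/le_x/mem_tnth.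
have has_p : has p c.
  apply/hasP; exists (tnth c [arg max_(l > ord0) tnth c l]%O).
    exact: mem_tnth.
  by apply/pP => l; case: (@arg_maxP _ _ _ ord0 predT (tnth c)) => // i0 _; apply.
have find_lt : (find p c < n.+1)%N by move: has_p; rewrite has_find size_tuple.
have tnth_find : tnth c (Ordinal find_lt) = nth 0 c (find p c).
  by rewrite (tnth_nth 0).
rewrite /argmax -/p; split.
- move=> <-; rewrite (tnth_nth 0) inordK //; split; first exact/pP/nth_find.
  move=> l /(before_find 0)/negbT/pP/existsNP[l' /negP]; rewrite -ltNge -tnth_nth.
  by move/lt_le_trans; apply; exact/pP/nth_find.
- move=> [le_i lt_i]; apply: val_inj; rewrite /= inordK //.
  have [lt_find|lt_i'|//] := ltngtP (find p c) i.
    have /pP/(_ i) := nth_find 0 has_p; rewrite -tnth_find.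
    by rewrite leNgt (lt_i (Ordinal find_lt)).
  by have := before_find 0 lt_i'; rewrite -tnth_nth; move/pP: (le_i) => ->.
Qed.

Lemma argmax_max c l : tnth c l <= tnth c (argmax c).
Proof. by have [] := (argmaxP c (argmax c)).1 erefl. Qed.

End argmax.

Definition pseudo_label {R : realType} {n} (c : n.+1.-tuple R) : n.+1.-tuple R :=
  onehot R (argmax c).

Section supnorm_dist.
Context {R : realType} {n : nat}.
Implicit Types u v : n.-tuple R.

Lemma supnorm_dist_ge0 u v : 0 <= supnorm_dist u v.
Proof. by apply: (big_ind (>= 0)) => // x y x0 y0; rewrite le_max x0. Qed.

Lemma le_supnorm_dist u v i : `|tnth u i - tnth v i| <= supnorm_dist u v.
Proof. exact: (le_bigmax _ (fun i => `|tnth u i - tnth v i|)). Qed.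

Lemma supnorm_dist_le u v r :
  0 <= r -> (forall i, `|tnth u i - tnth v i| <= r) -> supnorm_dist u v <= r.
Proof. by move=> r0 le_r; apply: bigmax_le. Qed.

Lemma supnorm_distxx u : supnorm_dist u u = 0.
Proof.
apply/eqP; rewrite eq_le supnorm_dist_ge0 andbT.
by apply: supnorm_dist_le => // i; rewrite subrr normr0.
Qed.

Lemma supnorm_dist_onehot_le1 (i j : 'I_n) :
  supnorm_dist (onehot R i) (onehot R j) <= 1.
Proof.
apply: supnorm_dist_le => // l; rewrite !tnth_mktuple.
by case: (i == l); case: (j == l);
  rewrite ?subrr ?normr0 ?subr0 ?sub0r ?normrN ?normr1.
Qed.

Lemma measurable_supnorm_dist :
  measurable_fun [set: n.-tuple R * n.-tuple R] (fun z => supnorm_dist z.1 z.2).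
Proof.
suff : forall s, measurable_fun [set: n.-tuple R * n.-tuple R]
    (fun z => \big[Num.max/0]_(i <- s) `|tnth z.1 i - tnth z.2 i|) by apply.
elim=> [|i s IHs].
  by under eq_fun do rewrite big_nil; exact: measurable_cst.
under eq_fun do rewrite big_cons.
apply: measurable_maxr => //; apply: measurableT_comp => //.
apply: measurable_funB.
  exact: measurableT_comp (measurable_tnth i) measurable_fst.
exact: measurableT_comp (measurable_tnth i) measurable_snd.
Qed.

End supnorm_dist.

Lemma supnorm_dist_pseudo_label (R : realType) n (c : n.+1.-tuple R)
    (i : 'I_n.+1) :
  supnorm_dist (pseudo_label c) (onehot R i) <= 2 * supnorm_dist c (onehot R i).
Proof.
rewrite /pseudo_label; set j := argmax c; have [->|ij] := eqVneq i j.
  by rewrite supnorm_distxx mulr_ge0 ?supnorm_dist_ge0.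
apply: le_trans (supnorm_dist_onehot_le1 _ _) _.
have := le_supnorm_dist c (onehot R i) i.
have := le_supnorm_dist c (onehot R i) j.
rewrite !tnth_mktuple eqxx (negbTE ij) subr0 distrC.
have := argmax_max c i; have := ler_norm (tnth c j).
have := ler_norm (1 - tnth c i).
lra.
Qed.

Section measurability.
Context {R : realType}.

Lemma measurable_tuple_set1 n (v : n.-tuple R) : measurable [set v].
Proof.
have -> : [set v] =
    \bigcap_(l in [set: 'I_n]) (fun c => tnth c l) @^-1` [set tnth v l].
  apply/seteqP; split=> [c -> //|c vc]; apply: eq_from_tnth => l; exact: vc.
apply: fin_bigcap_measurable => // l _; rewrite -[X in measurable X]setTI.
exact: measurable_tnth.
Qed.

Lemma measurable_range_onehot n : measurable (range (@onehot R n)).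
Proof.
have -> : range (@onehot R n) = \bigcup_(i in [set: 'I_n]) [set onehot R i].
  by apply/seteqP; split=> [_ [i _ <-]|_ [i _ ->]]; exists i.
by apply: fin_bigcup_measurable => // i _; exact: measurable_tuple_set1.
Qed.

Lemma measurable_argmax n : measurable_fun [set: n.+1.-tuple R] (@argmax R n).
Proof.
move=> _ A _; rewrite setTI.
have -> : @argmax R n @^-1` A = \bigcup_(i in A) [set c | argmax c = i].
  by apply/seteqP; split=> [c Ac|c [i Ai /= ->]]; first by exists (argmax c).
apply: fin_bigcup_measurable; first exact: finite_finset.
move=> i _.
have -> : [set c : n.+1.-tuple R | argmax c = i] =
    \bigcap_(l in [set: 'I_n.+1]) [set c | tnth c l <= tnth c i] `&`
    \bigcap_(l in [set l : 'I_n.+1 | (l < i)%N]) [set c | tnth c l < tnth c i].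
  apply/seteqP; split=> c.
    by move/argmaxP=> [le_i lt_i]; split=> l li; [exact: le_i | exact: lt_i].
  by move=> [le_i lt_i]; apply/argmaxP; split=> l; [exact: le_i | exact: lt_i].
apply: measurableI; apply: fin_bigcap_measurable => // l _;
  rewrite -[X in measurable X]setTI.
- exact: (measurable_fun_ler (measurable_tnth l) (measurable_tnth i)).
- exact: (measurable_fun_ltr (measurable_tnth l) (measurable_tnth i)).
Qed.

Lemma measurable_pseudo_label n :
  measurable_fun [set: n.+1.-tuple R] pseudo_label.
Proof. by apply: measurableT_comp => //; exact: measurable_argmax. Qed.

End measurability.

Lemma W_inf_le_scale (R : realType) n (P Q P' Q' : set (n.-tuple R) -> \bar R)
    (a : R) : 0 < a ->
  (forall pi, coupling P Q pi -> exists2 pi', coupling P' Q' pi' &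
     (\int[pi']_z (supnorm_dist z.1 z.2)%:E
        <= a%:E * \int[pi]_z (supnorm_dist z.1 z.2)%:E)%E) ->
  (a^-1%:E * W_inf P' Q' <= W_inf P Q)%E.
Proof.
move=> a_gt0 transport; apply/ereal_infP => _ [pi pi_coupling <-].
have [pi' pi'_coupling le_cost] := transport pi pi_coupling.
apply: (@le_trans _ _
  (a^-1%:E * (a%:E * \int[pi]_z (supnorm_dist z.1 z.2)%:E))%E).
  apply: lee_wpmul2l; first by rewrite lee_fin invr_ge0 ltW.
  by apply: le_trans le_cost; apply: ereal_inf_lbound; exists pi'.
by rewrite muleA -EFinM mulVf ?gt_eqF // mul1e.
Qed.

Section pseudo_label_coupling.
Context {R : realType} {n : nat}.
Local Notation T := (n.+1.-tuple R).

Definition pseudo_label_fst (z : T * T) : T * T := (pseudo_label z.1, z.2).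

Lemma measurable_pseudo_label_fst :
  measurable_fun [set: T * T] pseudo_label_fst.
Proof.
apply: measurable_fun_pair => //; apply: measurableT_comp => //.
exact: measurable_pseudo_label.
Qed.

HB.instance Definition _ :=
  isMeasurableFun.Build _ _ _ _ pseudo_label_fst measurable_pseudo_label_fst.

Variables (P Q : set T -> \bar R) (pi : probability (T * T)%type R).
Hypothesis pi_coupling : coupling P Q pi.

Lemma coupling_pseudo_label : coupling (fun A => P (pseudo_label @^-1` A)) Q
  (distribution pi pseudo_label_fst).
Proof.
move=> A mA; split; last exact: (pi_coupling _ mA).2.
have mpA : measurable (pseudo_label @^-1` A).
  by rewrite -[X in measurable X]setTI; exact: measurable_pseudo_label.
exact: (pi_coupling _ mpA).1.
Qed.

Lemma integral_pseudo_label_le : Q (~` range (@onehot R n.+1)) = 0%E ->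
  (\int[distribution pi pseudo_label_fst]_z (supnorm_dist z.1 z.2)%:E
     <= 2%:E * \int[pi]_z (supnorm_dist z.1 z.2)%:E)%E.
Proof.
move=> Q_onehot.
have msd : measurable_fun [set: T * T] (fun z => (supnorm_dist z.1 z.2)%:E).
  by apply/measurable_EFinP; exact: measurable_supnorm_dist.
have sd_ge0 (z : T * T) : (0 <= (supnorm_dist z.1 z.2)%:E)%E.
  by rewrite lee_fin supnorm_dist_ge0.
rewrite ge0_integral_distribution // -ge0_integralZl_EFin //.
apply: ae_ge0_le_integral => //.
- by move=> z _; exact: sd_ge0.
- exact: measurableT_comp msd measurable_pseudo_label_fst.
- by move=> z _; rewrite -EFinM lee_fin mulr_ge0 ?supnorm_dist_ge0.
- exact: measurable_funeM.
(* The pointwise bound needs a one-hot label [z.2], which [Q_onehot] makes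
   [pi]-almost sure. *)
exists (snd @^-1` (~` range (@onehot R n.+1))); split.
- rewrite -[X in measurable X]setTI; apply: measurable_snd => //.
  exact: measurableC (measurable_range_onehot _).
- rewrite -Q_onehot; apply: (pi_coupling _ _).2.
  exact: measurableC (measurable_range_onehot _).
move=> z /= not_le [i _ e_i]; apply: not_le => _.
by rewrite -e_i -EFinM lee_fin; exact: supnorm_dist_pseudo_label.
Qed.

End pseudo_label_coupling.

Theorem mainTheorem3 (R : realType) (d : measure_display) (X : measurableType d)
  (k : nat) (f : X -> k.+1.-tuple R)
  (f_meas : measurable_fun [set: X] f)
  (f_simplex : forall x, simplex (f x))
  (P_S P_T : probability (X * 'I_k.+1)%type R) :
  (forall A : set (k.+1.-tuple R), measurable A ->
     pushforward P_T (fun z => onehot R z.2) A =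
     pushforward P_S (fun z => onehot R z.2) A) ->
  ((2%:R)^-1%:E *
     W_inf (pushforward P_T (fun z => onehot R (argmax (f z.1))))
           (pushforward P_T (fun z => onehot R z.2))
   <= W_inf (pushforward P_T (fun z => f z.1))
            (pushforward P_S (fun z => onehot R z.2)))%E.
Proof.
move=> same_labels; apply: W_inf_le_scale => // pi pi_coupling.
exists (distribution pi pseudo_label_fst).
  move=> A mA; rewrite same_labels //.
  exact: coupling_pseudo_label pi_coupling A mA.
apply: integral_pseudo_label_le pi_coupling _.
rewrite /pushforward (_ : _ @^-1` _ = set0) ?measure0 //.
by apply/seteqP; split=> // z /=; apply; exists z.2.
Qed.
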